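(* Let $X$ be a finite nonempty set, $\mathcal F$ a family of subsets of $X$ whose union is $X$, with fractional covering number $\tau^*:=\tau^*(X,\mathcal F)$, and let $k$ be a positive integer. Then \[\tau_k(\mathcal F)\le\left\lceil\tau^*\left(k+\tfrac32\ln|X|+\tfrac32\sqrt{(4k+\ln|X|)\ln|X|}\right)\right\rceil\le\left\lceil 6\tau^*\max\{\ln|X|,k\}\right\rceil.\]
   Context: The $k$-fold covering number $\tau_k(\mathcal F)$ is the minimum cardinality of a multi-subfamily of $\mathcal F$ such that each point of $X$ is contained in at least $k$ members of the subfamily (counted with multiplicity). A fractional covering of $X$ by $\mathcal F$ is a map $w:\mathcal F\to[0,\infty)$ with $\sum_{F\in\mathcal F,\,x\in F}w(F)\ge1$ for all $x\in X$; the fractional covering number $\tau^*(X,\mathcal F)$ is the infimum of $\sum_{F\in\mathcal F}w(F)$ over all fractional coverings $w$. *)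

From Stdlib Require Import Reals ZArith.
From mathcomp Require Import all_boot.
Set Implicit Arguments. Unset Strict Implicit. Unset Printing Implicit Defensive.

Definition Rceil (x : R) : Z := (- Int_part (- x))%Z.

(* A multi-subfamily of F is given by multiplicities m : {set T} -> nat
   (only members of F are counted); its cardinality is the sum of multiplicities. *)
Definition multi_card (T : finType) (F : {set {set T}}) (m : {set T} -> nat) : nat :=
  \sum_(A in F) m A.

Definition is_kfold_cover (T : finType) (F : {set {set T}}) (k : nat)
  (m : {set T} -> nat) : Prop :=
  forall x : T, (k <= \sum_(A in F | x \in A) m A)%N.

Definition tau_k_le (T : finType) (F : {set {set T}}) (k : nat) (N : Z) : Prop :=
  exists m, is_kfold_cover F k m /\ (Z.of_nat (multi_card F m) <= N)%Z.

Definition is_frac_cover (T : finType) (F : {set {set T}}) (w : {set T} -> R) : Prop :=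
  (forall A, A \in F -> Rle 0 (w A)) /\
  (forall x : T, Rle 1 (\big[Rplus/R0]_(A in F | x \in A) w A)).

Definition frac_weight (T : finType) (F : {set {set T}}) (w : {set T} -> R) : R :=
  \big[Rplus/R0]_(A in F) w A.

Definition is_inf (E : R -> Prop) (t : R) : Prop :=
  (forall s, E s -> Rle t s) /\
  (forall u, (forall s, E s -> Rle u s) -> Rle u t).

Definition is_frac_cover_number (T : finType) (F : {set {set T}}) (t : R) : Prop :=
  is_inf (fun s => exists w, is_frac_cover F w /\ frac_weight F w = s) t.

From Stdlib Require Import Reals ZArith Lra Lia Classical.
From HB Require Import structures.
From mathcomp Require Import all_boot.
Set Implicit Arguments. Unset Strict Implicit. Unset Printing Implicit Defensive.

(* Take a fractional cover w of weight t' slightly above tau^*, and let p = w / t'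
   be the induced law on F, under which every point is hit with probability at
   least 1/t'.  For N independent draws and th = 1 - y, the mean of
   sum_x th^(hits of x) is at most |X| (1 - y/t')^N, and the method of
   conditional expectations finds draws doing no worse.  If this is at most th^k,
   no point can be hit fewer than k times.  Choosing y = D/(2k + D) with
   D = ln|X| + sqrt((4k + ln|X|) ln|X|) makes N = ceil(tau^* (k + 3D/2)) suffice. *)

Lemma Rplus_left_id : left_id R0 Rplus. Proof. exact: Rplus_0_l. Qed.
Lemma Rplus_associative : associative Rplus.
Proof. by move=> x y z; rewrite Rplus_assoc. Qed.
HB.instance Definition _ :=
  Monoid.isComLaw.Build R R0 Rplus Rplus_associative Rplus_comm Rplus_left_id.

Local Open Scope R_scope.

Section RealSums.
Variable I : finType.
Implicit Types (P : pred I) (f g : I -> R).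

Lemma Rsum_le P f g : (forall i, P i -> f i <= g i) ->
  \big[Rplus/R0]_(i | P i) f i <= \big[Rplus/R0]_(i | P i) g i.
Proof.
move=> fg; apply: (big_ind2 (fun a b => a <= b)) => //; first lra.
by move=> a b c d; lra.
Qed.

Lemma Rsum_ge0 P f : (forall i, P i -> 0 <= f i) ->
  0 <= \big[Rplus/R0]_(i | P i) f i.
Proof.
move=> f0; apply: (big_ind (fun a => 0 <= a)) => //; first lra.
by move=> a b; lra.
Qed.

Lemma Rsum_mulr P f a :
  a * \big[Rplus/R0]_(i | P i) f i = \big[Rplus/R0]_(i | P i) (a * f i).
Proof.
elim/big_rec2: _ => [|i x y _ <-]; first by rewrite Rmult_0_r.
by rewrite Rmult_plus_distr_l.
Qed.

Lemma Rsum_const f c : (forall i, f i = c) ->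
  \big[Rplus/R0]_(i : I) f i = INR #|I| * c.
Proof.
move=> fc; rewrite (eq_bigr (fun=> c)) // big_const.
elim: #|I| => [|n IHn]; first by rewrite /=; lra.
by rewrite S_INR /= IHn; lra.
Qed.

Lemma Rsum_ge_term P f j : P j -> (forall i, P i -> 0 <= f i) ->
  f j <= \big[Rplus/R0]_(i | P i) f i.
Proof.
move=> Pj f0; rewrite (bigD1 j) //=.
suff : 0 <= \big[Rplus/R0]_(i | P i && (i != j)) f i by lra.
by apply: Rsum_ge0 => i /andP [/f0].
Qed.

Lemma Rsum_exists_le_mean P (p a : I -> R) :
  (forall i, P i -> 0 <= p i) -> \big[Rplus/R0]_(i | P i) p i = 1 ->
  exists2 i, P i & a i <= \big[Rplus/R0]_(i | P i) (p i * a i).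
Proof.
move=> p0 p1; apply: NNPP => no_i.
set m := \big[Rplus/R0]_(i | P i) (p i * a i) in no_i.
have gt_m i : P i -> m < a i.
  by move=> Pi; apply: Rnot_le_lt => le_a; apply: no_i; exists i.
have [j Pj pj_gt0] : exists2 j, P j & 0 < p j.
  apply: NNPP => no_j.
  suff : \big[Rplus/R0]_(i | P i) p i <= \big[Rplus/R0]_(i | P i) 0.
    by rewrite big1_eq p1; lra.
  by apply: Rsum_le => i Pi; apply: Rnot_lt_le => pi_gt0; apply: no_j; exists i.
have dev0 : \big[Rplus/R0]_(i | P i) (p i * (a i - m)) = 0.
  rewrite (eq_bigr (fun i => p i * a i + (- m) * p i)); last by move=> i _; ring.
  by rewrite big_split /= -Rsum_mulr p1 /m; ring.
have : p j * (a j - m) <= \big[Rplus/R0]_(i | P i) (p i * (a i - m)).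
  apply: Rsum_ge_term => // i Pi; apply: Rmult_le_pos; first exact: p0.
  by have := gt_m i Pi; lra.
have := gt_m j Pj; rewrite dev0; nra.
Qed.

End RealSums.

Section PessimisticEstimator.
Variables (T : finType) (F : {set {set T}}) (p : {set T} -> R) (th : R).
Hypothesis p_ge0 : forall A, A \in F -> 0 <= p A.
Hypothesis p_sum1 : \big[Rplus/R0]_(A in F) p A = 1.

(* For A drawn from F with law p, [hit_mean x] is the mean of [th ^ (x \in A)]
   and [estimator c N] is the mean of [\sum_x th ^ (c x + hits of x)] over N
   independent draws. *)
Definition hit_mean (x : T) : R :=
  \big[Rplus/R0]_(A in F) (p A * th ^ (x \in A)).

Definition estimator (c : T -> nat) (N : nat) : R :=
  \big[Rplus/R0]_(x : T) (th ^ c x * hit_mean x ^ N).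

Lemma estimator_S c N :
  \big[Rplus/R0]_(A in F) (p A * estimator (fun x => c x + (x \in A))%N N)
  = estimator c N.+1.
Proof.
rewrite /estimator; under eq_bigr do rewrite Rsum_mulr.
rewrite exchange_big /=; apply: eq_bigr => x _.
rewrite (eq_bigr (fun A => th ^ c x * hit_mean x ^ N * (p A * th ^ (x \in A)))).
  by rewrite -Rsum_mulr -/(hit_mean x) /=; ring.
by move=> A _; rewrite pow_add; ring.
Qed.

(* The method of conditional expectations: draw by draw, some member of F
   does not increase the estimator. *)
Lemma estimator_derandomize N c : exists l : seq {set T},
  [/\ size l = N, {subset l <= F} &
      \big[Rplus/R0]_(x : T) th ^ (c x + count (fun A : {set T} => x \in A) l)
      <= estimator c N].
Proof.
elim: N c => [|N IHN] c.
  exists [::]; split => //; apply: Req_le; rewrite /estimator.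
  by apply: eq_bigr => x _ /=; rewrite addn0; ring.
have [A AF le_mean] := Rsum_exists_le_mean
  (fun A : {set T} => estimator (fun x => c x + (x \in A))%N N) p_ge0 p_sum1.
have [l [size_l lF le_l]] := IHN (fun x => c x + (x \in A))%N.
exists (A :: l); split; first by rewrite /= size_l.
  by move=> B; rewrite inE => /predU1P [->|/lF].
rewrite -estimator_S; apply: Rle_trans le_mean; apply: Rle_trans le_l.
by apply: Req_le; apply: eq_bigr => x _ /=; rewrite addnA.
Qed.

Lemma hit_meanE x :
  hit_mean x = 1 - (1 - th) * \big[Rplus/R0]_(A in F | x \in A) p A.
Proof.
have split_sum1 := p_sum1.
rewrite (bigID (fun A : {set T} => x \in A)) /= in split_sum1.
rewrite /hit_mean (bigID (fun A : {set T} => x \in A)) /=.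
rewrite (eq_bigr (fun A => th * p A)); last by move=> A /andP [_ ->] /=; ring.
rewrite [X in _ + X](eq_bigr p); last by move=> A /andP [_ /negbTE ->] /=; ring.
rewrite -Rsum_mulr.
have eqn a b : a + b = 1 -> th * a + b = 1 - (1 - th) * a.
  by move=> ab1; replace b with (1 - a) by lra; ring.
exact: eqn split_sum1.
Qed.

Lemma hit_mean_ge0 x : 0 <= th -> 0 <= hit_mean x.
Proof.
move=> th0; apply: Rsum_ge0 => A AF.
by apply: Rmult_le_pos; [exact: p_ge0 | exact: pow_le].
Qed.

End PessimisticEstimator.

Lemma sum_count_mem (I : finType) (P : pred I) (l : seq I) :
  (\sum_(A | P A) count_mem A l)%N = count P l.
Proof.
elim: l => [|B l IHl] /=; first by rewrite big1.
rewrite big_split /= IHl; congr (_ + _)%N.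
rewrite big_mkcond (bigD1 B) //= eqxx big1 => [|A /negbTE neq_AB].
  by case: (P B).
by rewrite eq_sym neq_AB; case: (P A).
Qed.

Lemma tau_k_le_seq (T : finType) (F : {set {set T}}) (k : nat) (l : seq {set T}) :
  {subset l <= F} -> (forall x, k <= count (fun A : {set T} => x \in A) l)%N ->
  tau_k_le F k (Z.of_nat (size l)).
Proof.
move=> lF l_cover; exists (fun A => count_mem A l); split; last first.
  rewrite /multi_card sum_count_mem (eq_in_count (a2 := predT)) ?count_predT.
    exact: Z.le_refl.
  by move=> A /lF.
move=> x; rewrite sum_count_mem (eq_in_count (a2 := fun A : {set T} => x \in A)) //.
by move=> A /lF /= ->.
Qed.

Lemma tau_k_le_trans (T : finType) (F : {set {set T}}) (k : nat) (N M : Z) :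
  (N <= M)%Z -> tau_k_le F k N -> tau_k_le F k M.
Proof. by move=> NM [m [m_cover m_card]]; exists m; split => //; lia. Qed.

Lemma pow_le_pow_inv (th : R) (a b : nat) :
  0 < th < 1 -> th ^ a <= th ^ b -> (b <= a)%N.
Proof.
move=> th01 le_pow; rewrite leqNgt; apply/negP => lt_ab; move: le_pow.
have [m ->] : exists m, b = (a + m.+1)%N.
  by exists (b - a.+1)%N; rewrite addnS -addSn subnKC.
have : 0 <= th ^ m.+1 < 1 by apply: pow_lt_1_compat; [lra | apply/ltP].
have : 0 < th ^ a by apply: pow_lt; lra.
rewrite pow_add; nra.
Qed.

Lemma kfold_cover_of_law (T : finType) (F : {set {set T}}) (k N : nat)
    (p : {set T} -> R) (a y : R) :
  (forall A, A \in F -> 0 <= p A) -> \big[Rplus/R0]_(A in F) p A = 1 ->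
  (forall x, a <= \big[Rplus/R0]_(A in F | x \in A) p A) ->
  0 < y < 1 -> INR #|T| * (1 - y * a) ^ N <= (1 - y) ^ k ->
  tau_k_le F k (Z.of_nat N).
Proof.
move=> p_ge0 p_sum1 p_hit y01 small.
have [l [size_l lF le_l]] :=
  estimator_derandomize (1 - y) p_ge0 p_sum1 N (fun=> 0%N).
rewrite -size_l; apply: tau_k_le_seq => // x.
apply: (@pow_le_pow_inv (1 - y)); first lra.
have le_est : estimator F p (1 - y) (fun=> 0%N) N <= INR #|T| * (1 - y * a) ^ N.
  rewrite /estimator -(Rsum_const (f := fun=> (1 - y * a) ^ N)) //.
  apply: Rsum_le => z _; rewrite /= Rmult_1_l; apply: pow_incr; split.
    by apply: hit_mean_ge0 => //; lra.
  by rewrite hit_meanE //; have := p_hit z; nra.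
apply: Rle_trans small; apply: Rle_trans le_est; apply: Rle_trans le_l.
rewrite -[count _ _]add0n; apply: (Rsum_ge_term (P := predT)) => // z _.
by apply: pow_le; lra.
Qed.

Lemma exp_pow u N : exp u ^ N = exp (INR N * u).
Proof.
elim: N => [|N IHN]; first by rewrite /= Rmult_0_l exp_0.
by rewrite S_INR /= IHN -exp_plus; f_equal; ring.
Qed.

Lemma exp_le x y : x <= y -> exp x <= exp y.
Proof. by case=> [lt_xy | ->]; [left; apply: exp_increasing | right]. Qed.

Lemma pow_one_sub_le_exp z N : z <= 1 -> (1 - z) ^ N <= exp (- (INR N * z)).
Proof.
move=> z1; rewrite Ropp_mult_distr_r -exp_pow; apply: pow_incr.
by have := exp_ineq1_le (- z); lra.
Qed.

Lemma exp_le_pow_one_sub y k :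
  0 <= y < 1 -> exp (- (INR k * (y / (1 - y)))) <= (1 - y) ^ k.
Proof.
move=> y01; rewrite Ropp_mult_distr_r -exp_pow; apply: pow_incr.
split; first exact: Rlt_le (exp_pos _).
have one_sub : 1 - y = / (1 + y / (1 - y)) by field; lra.
rewrite exp_Ropp {2}one_sub.
apply: Rinv_le_contravar; last exact: exp_ineq1_le.
have : 0 < / (1 - y) by apply: Rinv_0_lt_compat; lra.
rewrite /Rdiv; nra.
Qed.

(* The constants come from balancing the two exponents: with
   y = D / (2k + D) one has k y / (1 - y) = D / 2 and, by the quadratic
   equation for D, ln n = y D / 2. *)
Lemma chernoff_choice (n D a : R) (k N : nat) :
  0 < n -> 0 < D -> (0 < k)%N -> D * D = ln n * (4 * INR k + 2 * D) ->
  a <= 1 -> INR k + D <= INR N * a ->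
  n * (1 - D / (2 * INR k + D) * a) ^ N <= (1 - D / (2 * INR k + D)) ^ k.
Proof.
move=> n_gt0 D_gt0 k_gt0 D_root a1 many_draws.
have k_pos : 0 < INR k by apply: lt_0_INR; apply/ltP.
set y := D / (2 * INR k + D).
have y_def : y * (2 * INR k + D) = D by rewrite /y; field; lra.
have y01 : 0 < y < 1.
  split; first by apply: Rdiv_lt_0_compat; lra.
  by apply: (Rmult_lt_reg_r (2 * INR k + D)); lra.
have lnn : ln n = y * (D / 2).
  apply: (Rmult_eq_reg_r (2 * (2 * INR k + D))); last lra.
  by rewrite /y; field_simplify; [nra | lra].
have ky : INR k * (y / (1 - y)) = D / 2.
  by rewrite /y; field; split; lra.
have draws : n * (1 - y * a) ^ N <= exp (ln n + - (INR N * (y * a))).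
  rewrite exp_plus exp_ln //; apply: Rmult_le_compat_l; first lra.
  by apply: pow_one_sub_le_exp; nra.
apply: Rle_trans draws _; apply: Rle_trans (exp_le_pow_one_sub k _); last lra.
by rewrite ky; apply: exp_le; nra.
Qed.

Lemma Rceil_ge x : x <= IZR (Rceil x).
Proof. by rewrite /Rceil opp_IZR; have [le_int _] := base_Int_part (- x); lra. Qed.

Lemma Rceil_lt x : IZR (Rceil x) < x + 1.
Proof. by rewrite /Rceil opp_IZR; have [_ gt_int] := base_Int_part (- x); lra. Qed.

Lemma Rceil_le x y : x <= y -> (Rceil x <= Rceil y)%Z.
Proof.
move=> le_xy; have := Rceil_lt x; have := Rceil_ge y => le_y lt_x.
have /lt_IZR : IZR (Rceil x) < IZR (Rceil y + 1) by rewrite plus_IZR; lra.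
lia.
Qed.

Lemma frac_weight_ge1 (T : finType) (F : {set {set T}}) (w : {set T} -> R) (x : T) :
  is_frac_cover F w -> 1 <= frac_weight F w.
Proof.
move=> [w_ge0 w_cover]; rewrite /frac_weight (bigID (fun A : {set T} => x \in A)) /=.
have rest_ge0 : 0 <= \big[Rplus/R0]_(A in F | x \notin A) w A.
  by apply: Rsum_ge0 => A /andP [/w_ge0].
by have := Rplus_le_compat _ _ _ _ (w_cover x) rest_ge0; rewrite Rplus_0_r.
Qed.

Lemma frac_cover_number_ge1 (T : finType) (F : {set {set T}}) (t : R) (x : T) :
  is_frac_cover_number F t -> 1 <= t.
Proof.
by move=> [_ t_glb]; apply: t_glb => s [w [w_cover <-]]; exact: frac_weight_ge1 x w_cover.
Qed.

Lemma frac_cover_lt (T : finType) (F : {set {set T}}) (t u : R) :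
  is_frac_cover_number F t -> t < u ->
  exists2 w, is_frac_cover F w & frac_weight F w < u.
Proof.
move=> [_ t_glb] lt_tu; apply: NNPP => no_w.
suff : u <= t by lra.
apply: t_glb => s [w [w_cover <-]]; apply: Rnot_lt_le => lt_wu.
by apply: no_w; exists w.
Qed.

Lemma kfold_cover_of_frac_cover (T : finType) (F : {set {set T}}) (k N : nat)
    (w : {set T} -> R) (y : R) :
  is_frac_cover F w -> 0 < frac_weight F w -> 0 < y < 1 ->
  INR #|T| * (1 - y / frac_weight F w) ^ N <= (1 - y) ^ k ->
  tau_k_le F k (Z.of_nat N).
Proof.
move=> [w_ge0 w_hit] t_gt0 y01 small.
set t := frac_weight F w in t_gt0 small.
have inv_t_gt0 : 0 < / t by apply: Rinv_0_lt_compat.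
have w_div A : w A / t = / t * w A by rewrite /Rdiv Rmult_comm.
apply: (kfold_cover_of_law (p := fun A => w A / t) (a := / t)) y01 small.
- by move=> A AF; apply: Rmult_le_pos; [exact: w_ge0 | lra].
- rewrite (eq_bigr _ (fun A _ => w_div A)) -Rsum_mulr -/(frac_weight F w) -/t.
  by field; lra.
- move=> x; rewrite (eq_bigr _ (fun A _ => w_div A)) -Rsum_mulr.
  by rewrite -[X in X <= _]Rmult_1_r; apply: Rmult_le_compat_l (w_hit x); lra.
Qed.

Lemma tau_k_le_card1 (T : finType) (F : {set {set T}}) (k : nat) :
  #|T| = 1%N -> \bigcup_(A in F) A = [set: T] -> tau_k_le F k (Z.of_nat k).
Proof.
move=> T1 F_cover; have [x0 _] : exists x0 : T, true by apply/card_gt0P; rewrite T1.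
have /bigcupP [A AF x0A] : x0 \in \bigcup_(A in F) A by rewrite F_cover inE.
have all_x0 (x : T) : x = x0 by apply: (fintype_le1P (eq_leq T1)).
rewrite -[k in Z.of_nat k](size_nseq k A); apply: tau_k_le_seq.
  by move=> B /nseqP [->].
by move=> x; rewrite count_nseq (all_x0 x) x0A mul1n.
Qed.

Lemma frac_bound_le_6max (t L K : R) : 0 <= t -> 0 <= L -> 0 <= K ->
  t * (K + 3/2 * L + 3/2 * sqrt ((4 * K + L) * L)) <= 6 * t * Rmax L K.
Proof.
move=> t0 L0 K0; set M := Rmax L K.
have [LM KM] : L <= M /\ K <= M by split; [apply: Rmax_l | apply: Rmax_r].
have sqrt_le : sqrt ((4 * K + L) * L) <= 7/3 * M.
  apply: Rsqr_incr_0_var; last nra.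
  by rewrite Rsqr_sqrt /Rsqr; nra.
nra.
Qed.

Lemma tau_k_le_frac_bound (T : finType) (F : {set {set T}}) (k : nat) (t : R) :
  (1 < #|T|)%N -> (0 < k)%N -> is_frac_cover_number F t ->
  let L := ln (INR #|T|) in
  tau_k_le F k (Rceil (t * (INR k + 3/2 * L + 3/2 * sqrt ((4 * INR k + L) * L)))).
Proof.
move=> T_gt1 k_gt0 t_frac L.
have [x0 _] : exists x0 : T, true by apply/card_gt0P; exact: ltnW.
have t1 := frac_cover_number_ge1 x0 t_frac.
have k1 : 1 <= INR k by apply: (le_INR 1); apply/leP.
have L_gt0 : 0 < L.
  rewrite /L -ln_1; apply: ln_increasing; first lra.
  by apply: (lt_INR 1); apply/ltP.
set S := sqrt ((4 * INR k + L) * L); have S0 : 0 <= S by apply: sqrt_pos.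
have SS : S * S = (4 * INR k + L) * L by apply: sqrt_sqrt; nra.
set D := L + S; have D_gt0 : 0 < D by rewrite /D; lra.
have D_root : D * D = L * (4 * INR k + 2 * D) by rewrite /D; nra.
set B := t * (INR k + 3/2 * L + 3/2 * S).
have B_eq : B = t * (INR k + D) + t * D / 2 by rewrite /B /D; field.
have [w w_cover w_lt] :
    exists2 w, is_frac_cover F w & frac_weight F w < B / (INR k + D).
  apply: frac_cover_lt t_frac _.
  apply: (Rmult_lt_reg_r (INR k + D)); first lra.
  by rewrite /Rdiv Rmult_assoc Rinv_l; nra.
set t' := frac_weight F w in w_lt; have t'1 : 1 <= t' := frac_weight_ge1 x0 w_cover.
have [N N_eq] : exists N : nat, Rceil B = Z.of_nat N.
  exists (Z.to_nat (Rceil B)); rewrite Znat.Z2Nat.id //.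
  by apply: le_IZR; have := Rceil_ge B; nra.
have many_draws : (INR k + D) * t' <= INR N.
  rewrite (INR_IZR_INZ N) -N_eq; apply: Rle_trans (Rceil_ge B).
  apply: Rlt_le; apply: (Rmult_lt_reg_r (/ (INR k + D))).
    by apply: Rinv_0_lt_compat; lra.
  by rewrite Rmult_comm -Rmult_assoc Rinv_l; lra.
rewrite N_eq; apply: (kfold_cover_of_frac_cover (y := D / (2 * INR k + D)) w_cover);
  rewrite -/t'.
- lra.
- split; first by apply: Rdiv_lt_0_compat; lra.
  apply: (Rmult_lt_reg_r (2 * INR k + D)); first lra.
  by rewrite /Rdiv Rmult_assoc Rinv_l; lra.
apply: chernoff_choice => //; first by apply: (lt_INR 0); apply/ltP; exact: ltnW.
  by rewrite -Rinv_1; apply: Rinv_le_contravar; lra.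
apply: (Rmult_le_reg_r t'); first lra.
by rewrite Rmult_assoc Rinv_l; lra.
Qed.

Theorem mainTheorem10 (T : finType) (F : {set {set T}}) (k : nat) (tstar : R) :
  (0 < #|T|)%N ->
  \bigcup_(A in F) A = [set: T] ->
  is_frac_cover_number F tstar ->
  (0 < k)%N ->
  let L := ln (INR #|T|) in
  tau_k_le F k
    (Rceil (tstar * (INR k + 3/2 * L + 3/2 * sqrt ((4 * INR k + L) * L))))
  /\
  (Rceil (tstar * (INR k + 3/2 * L + 3/2 * sqrt ((4 * INR k + L) * L)))
     <= Rceil (6 * tstar * Rmax L (INR k)))%Z.
Proof.
move=> T_gt0 F_cover t_frac k_gt0 L.
have [x0 _] := card_gt0P T_gt0.
have t1 := frac_cover_number_ge1 x0 t_frac.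
have L0 : 0 <= L.
  rewrite /L; have [n_gt1 | <-] : 1 <= INR #|T| by apply: (le_INR 1); apply/leP.
    by left; rewrite -ln_1; apply: ln_increasing; lra.
  by rewrite ln_1; right.
split; last by apply: Rceil_le; apply: frac_bound_le_6max; [lra | lra | apply: pos_INR].
have [T1 | T_gt1] := eqVneq #|T| 1%N; last first.
  by apply: tau_k_le_frac_bound => //; rewrite ltn_neqAle eq_sym T_gt1.
apply: tau_k_le_trans (tau_k_le_card1 k T1 F_cover).
apply: le_IZR; rewrite -INR_IZR_INZ; apply: Rle_trans (Rceil_ge _).
have -> : L = 0 by rewrite /L T1 /= ln_1.
by rewrite !Rmult_0_r sqrt_0; have := pos_INR k; nra.
Qed.
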